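(* In the setting described in the context (with $L=[0,1]$), let $q\in\{1,\dots,n\}$ and assume there exists $A\subseteq\mathcal C$ with $|A|=n-q$ and $\nu_q(A)=0$. Then $$\min_{\mu\ q\text{-minitive capacity}}\ \max_{1\le k\le N}|S_\mu(x^{(k)})-\alpha^{(k)}|=\nabla_q,$$ where the minimum is over all $q$-minitive capacities $\mu:2^{\mathcal C}\to[0,1]$ (and is attained).
   Context: Let $\mathcal C=\{1,\dots,n\}$ and $L=[0,1]$. A capacity is a map $\mu:2^{\mathcal C}\to[0,1]$ with $\mu(\emptyset)=0$, $\mu(\mathcal C)=1$, monotone for inclusion; it is $q$-minitive if for all $X$ with $|X|<n-q$, $\mu(X)=\min_{Y\supsetneq X,\ |Y|\ge n-q}\mu(Y)$. Sugeno integral: $S_\mu(x)=\max_{A\subseteq\mathcal C}\min(\min_{i\in A}x_i,\mu(A))$ with $\min_{i\in\emptyset}x_i=1$. Training data: $N$ pairs $(x^{(k)},\alpha^{(k)})$, $x^{(k)}\in[0,1]^n$, $\alpha^{(k)}\in[0,1]$. For $A\subsetneq\mathcal C$, $\gamma_{k,A}=\max_{i\in\mathcal C\setminus A}x^{(k)}_i$. Write $t^+=\max(t,0)$. For $1\le i\le N$ and $A\subsetneq\mathcal C$ with $|A|\ge n-q$, let $\sigma_\epsilon(\alpha^{(i)},\gamma_{l,A},\alpha^{(l)})=\min\big(\tfrac{(\alpha^{(l)}-\alpha^{(i)})^+}{2},(\alpha^{(l)}-\gamma_{l,A})^+\big)$, $\nabla_{i,A}=\max\big((\gamma_{i,A}-\alpha^{(i)})^+,\max_{1\le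 l\le N}\sigma_\epsilon(\alpha^{(i)},\gamma_{l,A},\alpha^{(l)})\big)$, $\nabla_i=\min_{A\subsetneq\mathcal C,\ |A|\ge n-q}\nabla_{i,A}$, and $\nabla_q=\max_{1\le i\le N}\nabla_i$. For $A\subsetneq\mathcal C$ with $|A|\ge n-q$, $\nu_q(A)=\max_{1\le k\le N}\big(\gamma_{k,A}\,\epsilon\,\max(\alpha^{(k)}-\nabla_q,0)\big)$, where $a\,\epsilon\,b=b$ if $a<b$ and $a\,\epsilon\,b=0$ if $a\ge b$. *)

From mathcomp Require Import all_boot all_order all_algebra.
From mathcomp Require Import reals.
Set Implicit Arguments. Unset Strict Implicit. Unset Printing Implicit Defensive.
Import Order.TTheory GRing.Theory Num.Theory.
Local Open Scope ring_scope.

Section Defs.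
Variable R : realType.

Definition pospart (t : R) : R := Num.max t 0.

Definition epsop (a b : R) : R := if a < b then b else 0.

(* capacity on C = 'I_n (index i : 'I_n stands for criterion i+1) *)
Definition capacity (n : nat) (mu : {set 'I_n} -> R) : Prop :=
  [/\ mu set0 = 0, mu setT = 1,
      (forall A, 0 <= mu A <= 1) &
      (forall A B : {set 'I_n}, A \subset B -> mu A <= mu B)].

(* q-minitive: for |X| < n-q, mu X = min over Y strictly containing X with |Y| >= n-q.
   The index set is nonempty (it contains setT), so the default 1 of the min is irrelevant. *)
Definition qminitive (n q : nat) (mu : {set 'I_n} -> R) : Prop :=
  forall X : {set 'I_n}, (#|X| < n - q)%N ->
    mu X = \big[Num.min/1]_(Y : {set 'I_n} | (X \proper Y) && (n - q <= #|Y|)%N) mu Y.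

(* Sugeno integral; empty min is 1, max over all A (A = set0 contributes 0) *)
Definition sugeno (n : nat) (mu : {set 'I_n} -> R) (x : 'I_n -> R) : R :=
  \big[Num.max/0]_(A : {set 'I_n}) Num.min (\big[Num.min/1]_(i in A) x i) (mu A).

Variables (n N : nat) (x : 'I_N -> 'I_n -> R) (alpha : 'I_N -> R).

(* gamma_{k,A} = max_{i notin A} x^(k)_i  (A proper, so the range is nonempty; x >= 0) *)
Definition gamma (k : 'I_N) (A : {set 'I_n}) : R :=
  \big[Num.max/0]_(i in ~: A) x k i.

Definition sigma_eps (ai gla al : R) : R :=
  Num.min (pospart (al - ai) / 2) (pospart (al - gla)).

Definition nablaIA (i : 'I_N) (A : {set 'I_n}) : R :=
  Num.max (pospart (gamma i A - alpha i))
          (\big[Num.max/0]_(l : 'I_N) sigma_eps (alpha i) (gamma l A) (alpha l)).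

(* min over proper A with |A| >= n-q (nonempty family for 1 <= q <= n; values are in [0,1]) *)
Definition nablaI (q : nat) (i : 'I_N) : R :=
  \big[Num.min/1]_(A : {set 'I_n} | (A \proper setT) && (n - q <= #|A|)%N) nablaIA i A.

Definition nablaq (q : nat) : R := \big[Num.max/0]_(i : 'I_N) nablaI q i.

Definition nuq (q : nat) (A : {set 'I_n}) : R :=
  \big[Num.max/0]_(k : 'I_N) epsop (gamma k A) (Num.max (alpha k - nablaq q) 0).

Definition sugeno_error (mu : {set 'I_n} -> R) : R :=
  \big[Num.max/0]_(k : 'I_N) `|sugeno mu (x k) - alpha k|.

End Defs.

From mathcomp Require Import all_boot all_order all_algebra.
From mathcomp Require Import reals lra zify.
Set Implicit Arguments. Unset Strict Implicit. Unset Printing Implicit Defensive.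
Import Order.TTheory GRing.Theory Num.Theory.
Local Open Scope ring_scope.

(* For a q-minitive capacity mu, S_mu(x) is the minimum of max(gamma_A(x), mu A)
   over the proper sets A with |A| >= n - q.  Taking a minimising A for an example i,
   the errors at i and at any other example l bound nabla_{i,A}, whence nabla_q is
   a lower bound.  Conversely, nu_q (with the value 1 on C) extended q-minitively
   is a capacity, since nu_q vanishes on a set of size n - q, and its Sugeno
   integral stays within nabla_q of every alpha^(k). *)

Definition qlarge (n q : nat) (A : {set 'I_n}) : bool :=
  (A \proper setT) && (n - q <= #|A|)%N.

Lemma qlarge_exists (n q : nat) : (1 <= q <= n)%N -> exists A : {set 'I_n}, qlarge q A.
Proof.
case/andP=> q_gt0 q_le_n; have n_gt0 : (0 < n)%N by apply: leq_trans q_le_n.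
pose i0 := Ordinal n_gt0; exists [set~ i0].
rewrite /qlarge cardsC1 card_ord properT; apply/andP; split; last by lia.
by apply/eqP=> /setP/(_ i0); rewrite in_setC1 eqxx inE.
Qed.

Section Arithmetic.
Variable R : realType.

Lemma pospart_le (t e : R) : (pospart t <= e) = (t <= e) && (0 <= e).
Proof. exact: ge_max. Qed.

Lemma sigma_eps_le_error (ai al g si sl e : R) :
  `|si - ai| <= e -> `|sl - al| <= e -> sl <= Num.max g si ->
  sigma_eps ai g al <= e.
Proof.
move=> err_i err_l sl_le; have e_ge0 : 0 <= e := le_trans (normr_ge0 _) err_i.
move: err_i err_l; rewrite !ler_norml => /andP [_ si_le] /andP [al_le _].
rewrite /sigma_eps ge_min; have [g_ge|g_lt] := leP (al - g) e.
  by rewrite pospart_le g_ge e_ge0 orbT.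
(* g < al - e <= sl, so sl <= si and al - ai <= 2e *)
have sl_le_si : sl <= si by move: sl_le; rewrite le_max => /orP [] ?; lra.
have : pospart (al - ai) <= e *+ 2 by rewrite pospart_le; apply/andP; split; lra.
by move=> ?; apply/orP; left; lra.
Qed.

Lemma epsop_le_sigma_eps (ak al g d : R) :
  0 <= g -> 0 <= ak -> 0 <= d -> sigma_eps ak g al <= d ->
  epsop g (Num.max (al - d) 0) <= ak + d.
Proof.
move=> g_ge0 ak_ge0 d_ge0; rewrite /epsop /sigma_eps ge_min !pospart_le.
case: ifP => [|_ _]; last lra.
rewrite lt_max => /orP g_lt /orP sigma_le; rewrite ge_max; apply/andP; split; last lra.
have : al - ak <= pospart (al - ak) by rewrite le_max lexx.
case: sigma_le => [|/andP [? _]] ?; first lra.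
by case: g_lt => ?; lra.
Qed.

End Arithmetic.

Section SugenoIntegral.
Variables (R : realType) (n N : nat) (x : 'I_N -> 'I_n -> R) (k : 'I_N).
Implicit Types (mu : {set 'I_n} -> R) (A B : {set 'I_n}).

Lemma sugeno_ge0 mu (y : 'I_n -> R) : 0 <= sugeno mu y.
Proof. exact: bigmax_ge_id. Qed.

Lemma sugeno_le1 mu (y : 'I_n -> R) : (forall A, mu A <= 1) -> sugeno mu y <= 1.
Proof. by move=> mu_le1; apply: bigmax_le => // A _; rewrite ge_min mu_le1 orbT. Qed.

Lemma gamma_ge0 A : 0 <= gamma x k A.
Proof. exact: bigmax_ge_id. Qed.

Lemma gamma_le1 A : (forall i, x k i <= 1) -> gamma x k A <= 1.
Proof. by move=> x_le1; apply: bigmax_le. Qed.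

Lemma gamma_anti A B : A \subset B -> gamma x k B <= gamma x k A.
Proof.
move=> sAB; apply: bigmax_le => [|i]; first exact: gamma_ge0.
rewrite !in_setC => iB; apply: le_bigmax_cond; rewrite in_setC.
by apply: contra iB; apply: (subsetP sAB).
Qed.

Lemma sugeno_le_gamma_max mu A :
  (forall A B, A \subset B -> mu A <= mu B) ->
  sugeno mu (x k) <= Num.max (gamma x k A) (mu A).
Proof.
move=> mu_mono; apply: bigmax_le => [|B _]; first by rewrite le_max gamma_ge0.
have [sBA|/subsetPn [i iB iA]] := boolP (B \subset A).
  by rewrite ge_min; apply/orP; right; rewrite le_max mu_mono ?orbT.
rewrite ge_min le_max; apply/orP; left; apply/orP; left.
apply: le_trans (bigmin_le_cond _ _ iB) _.
by apply: le_bigmax_cond; rewrite in_setC.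
Qed.

Lemma le_sugeno_qminitive (q : nat) mu t : capacity mu -> qminitive q mu -> t <= 1 ->
  (forall A, qlarge q A -> t <= Num.max (gamma x k A) (mu A)) ->
  t <= sugeno mu (x k).
Proof.
move=> [_ muT _ _] mu_qmin t_le1 t_le.
have [t_le0|t_gt0] := leP t 0; first exact: le_trans t_le0 (sugeno_ge0 _ _).
(* the level set B = {x >= t} witnesses S_mu(x) >= t *)
pose B := [set i | t <= x k i].
have gamma_lt (Y : {set 'I_n}) : B \subset Y -> gamma x k Y < t.
  move=> sBY; apply/bigmax_ltP; split=> // i; rewrite in_setC => iY.
  have : i \notin B by apply: contra iY; apply: (subsetP sBY).
  by rewrite inE ltNge.
have mu_ge (Y : {set 'I_n}) : B \subset Y -> (n - q <= #|Y|)%N -> t <= mu Y.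
  move=> sBY cardY; have [->|Y_neqT] := eqVneq Y setT; first by rewrite muT.
  have := t_le Y; rewrite /qlarge properT Y_neqT cardY => /(_ isT).
  by rewrite le_max leNgt gamma_lt.
apply: (bigmax_sup B) => //; rewrite le_min; apply/andP; split.
  by apply: le_bigmin => // i; rewrite inE.
have [cardB|cardB] := leqP (n - q) #|B|; first exact: mu_ge.
rewrite (mu_qmin B cardB); apply: le_bigmin => // Y /andP [pBY cardY].
exact: mu_ge (proper_sub pBY) cardY.
Qed.

Lemma sugeno_qminitiveE (q : nat) mu : capacity mu -> qminitive q mu ->
  sugeno mu (x k) =
    \big[Num.min/1]_(A | qlarge q A) Num.max (gamma x k A) (mu A).
Proof.
move=> mu_cap mu_qmin; have [_ _ mu01 mu_mono] := mu_cap.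
apply: le_anti; apply/andP; split.
  apply: le_bigmin => [|A _]; last exact: sugeno_le_gamma_max.
  by apply: sugeno_le1 => A; case/andP: (mu01 A).
apply: le_sugeno_qminitive mu_cap mu_qmin _ _; first exact: bigmin_le_id.
by move=> A; apply: bigmin_le_cond.
Qed.

End SugenoIntegral.

Section QminitiveExtension.
Variables (R : realType) (n q : nat) (f : {set 'I_n} -> R).
Implicit Types A B X Y : {set 'I_n}.
Hypothesis f01 : forall A, 0 <= f A <= 1.
Hypothesis f_mono : forall A B, A \subset B -> f A <= f B.

Definition qminitive_ext (X : {set 'I_n}) : R :=
  if (n - q <= #|X|)%N then f X
  else \big[Num.min/1]_(Y : {set 'I_n} | (X \proper Y) && (n - q <= #|Y|)%N) f Y.

Lemma qminitive_extE X : (n - q <= #|X|)%N -> qminitive_ext X = f X.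
Proof. by rewrite /qminitive_ext => ->. Qed.

Lemma qminitive_ext_qminitive : qminitive q qminitive_ext.
Proof.
move=> X cardX; rewrite /qminitive_ext leqNgt cardX /=.
by apply: eq_bigr => Y /andP [_ ->].
Qed.

Lemma qminitive_ext01 X : 0 <= qminitive_ext X <= 1.
Proof.
rewrite /qminitive_ext; case: ifP => _ //.
by rewrite bigmin_le_id andbT; apply: le_bigmin => // Y _; case/andP: (f01 Y).
Qed.

Lemma qminitive_ext_mono X Y : X \subset Y -> qminitive_ext X <= qminitive_ext Y.
Proof.
move=> sXY; have cardXY := subset_leq_card sXY; rewrite /qminitive_ext.
case: ifP => cardX; case: ifP => cardY.
- exact: f_mono.
- by move: cardY; rewrite (leq_trans cardX cardXY).
- have [eXY|nXY] := eqVneq X Y; first by move: cardX; rewrite eXY cardY.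
  by apply: bigmin_le_cond; rewrite cardY andbT properEneq nXY sXY.
- apply: le_bigmin => [|Z /andP [pYZ cardZ]]; first exact: bigmin_le_id.
  by apply: bigmin_le_cond; rewrite cardZ andbT (sub_proper_trans sXY pYZ).
Qed.

Lemma qminitive_ext_capacity :
  f setT = 1 -> (exists A, #|A| = (n - q)%N /\ f A = 0) -> capacity qminitive_ext.
Proof.
move=> fT [A [cardA fA0]]; split.
- rewrite /qminitive_ext cards0; case: ifPn => [|cardA_gt0].
    by rewrite leqn0 -cardA cards_eq0 => /eqP <-.
  have A_large : (set0 \proper A) && (n - q <= #|A|)%N.
    by rewrite proper0 -cards_eq0 cardA leqnn andbT -leqn0.
  apply: le_anti; apply/andP; split; first by apply: (bigmin_inf A); rewrite ?fA0.
  by apply: le_bigmin => // Y _; case/andP: (f01 Y).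
- by rewrite qminitive_extE ?cardsT ?card_ord ?leq_subr.
- exact: qminitive_ext01.
- exact: qminitive_ext_mono.
Qed.

End QminitiveExtension.

Section Fitting.
Variables (R : realType) (n N : nat) (x : 'I_N -> 'I_n -> R) (alpha : 'I_N -> R).
Variable q : nat.
Implicit Types (mu : {set 'I_n} -> R) (A B : {set 'I_n}).
Hypothesis x01 : forall k i, 0 <= x k i <= 1.
Hypothesis alpha01 : forall k, 0 <= alpha k <= 1.
Hypothesis q_range : (1 <= q <= n)%N.

Local Notation nabla := (nablaq x alpha q).
Local Notation nu := (nuq x alpha q).

Lemma nablaq_ge0 : 0 <= nabla.
Proof. exact: bigmax_ge_id. Qed.

Lemma nablaIA_le1 i A : nablaIA x alpha i A <= 1.
Proof.
have [ai_ge0 ai_le1] := andP (alpha01 i).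
rewrite /nablaIA ge_max pospart_le ler01 andbT; apply/andP; split.
  have := gamma_le1 A (fun j => proj2 (andP (x01 i j))); lra.
apply: bigmax_le => // l _; rewrite /sigma_eps ge_min; apply/orP; left.
have [al_ge0 al_le1] := andP (alpha01 l).
have : pospart (alpha l - alpha i) <= 1 by rewrite pospart_le ler01 andbT; lra.
by move=> ?; lra.
Qed.

Lemma nablaIA_le_sugeno_error mu i A :
  (forall A B, A \subset B -> mu A <= mu B) ->
  sugeno mu (x i) = Num.max (gamma x i A) (mu A) ->
  nablaIA x alpha i A <= sugeno_error x alpha mu.
Proof.
move=> mu_mono SiE; set e := sugeno_error x alpha mu.
have err_le l : `|sugeno mu (x l) - alpha l| <= e by exact: le_bigmax.
rewrite /nablaIA ge_max; apply/andP; split.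
  rewrite pospart_le (le_trans (normr_ge0 _) (err_le i)) andbT.
  have := err_le i; rewrite SiE ler_norml => /andP [_].
  have : gamma x i A <= Num.max (gamma x i A) (mu A) by rewrite le_max lexx.
  by move=> ? ?; lra.
apply: bigmax_le => [|l _]; first exact: le_trans (normr_ge0 _) (err_le i).
apply: sigma_eps_le_error (err_le i) (err_le l) _.
apply: le_trans (sugeno_le_gamma_max _ _ A mu_mono) _.
by rewrite SiE ge_max !le_max !lexx !orbT.
Qed.

Lemma nablaq_le_sugeno_error mu : capacity mu -> qminitive q mu ->
  nabla <= sugeno_error x alpha mu.
Proof.
move=> mu_cap mu_qmin; have [_ _ mu01 mu_mono] := mu_cap.
apply: bigmax_le => [|i _]; first exact: bigmax_ge_id.
have [A1 A1large] := qlarge_exists q_range.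
have max_le1 A : qlarge q A -> Num.max (gamma x i A) (mu A) <= 1.
  move=> _; rewrite ge_max gamma_le1; last by move=> j; case/andP: (x01 i j).
  by case/andP: (mu01 A).
have [A Alarge minE] := eq_bigmin A1 _ _ A1large max_le1.
rewrite -sugeno_qminitiveE // in minE.
apply: le_trans (nablaIA_le_sugeno_error mu_mono minE).
exact: bigmin_le_cond.
Qed.

Definition nuq_top A : R := if A == setT then 1 else nu A.

Definition fitted_capacity : {set 'I_n} -> R := qminitive_ext q nuq_top.

Lemma nuq01 A : 0 <= nu A <= 1.
Proof.
rewrite bigmax_ge_id /=; apply: bigmax_le => // k _; rewrite /epsop.
case: ifP => // _; rewrite ge_max ler01 andbT.
by have := alpha01 k; have := nablaq_ge0; lra.
Qed.

Lemma nuq_mono A B : A \subset B -> nu A <= nu B.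
Proof.
move=> sAB; apply: le_bigmax2 => k _; rewrite /epsop.
case: ifP => [gA_lt|_]; first by rewrite (le_lt_trans (gamma_anti _ _ sAB) gA_lt).
by case: ifP => // _; rewrite le_max lexx orbT.
Qed.

Lemma nuq_top01 A : 0 <= nuq_top A <= 1.
Proof. by rewrite /nuq_top; case: ifP => _; [rewrite ler01 lexx | exact: nuq01]. Qed.

Lemma nuq_top_mono A B : A \subset B -> nuq_top A <= nuq_top B.
Proof.
move=> sAB; rewrite /nuq_top; have [_|B_neqT] := eqVneq B setT.
  by case: ifP => _ //; case/andP: (nuq01 A).
have A_neqT : A != setT by apply: contraNneq B_neqT => AT; rewrite -subTset -AT.
by rewrite (negPf A_neqT) nuq_mono.
Qed.

Lemma fitted_capacity_qminitive : qminitive q fitted_capacity.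
Proof. exact: qminitive_ext_qminitive. Qed.

Lemma fitted_capacityE A : qlarge q A -> fitted_capacity A = nu A.
Proof.
case/andP; rewrite properT => A_neqT cardA.
by rewrite /fitted_capacity qminitive_extE // /nuq_top (negPf A_neqT).
Qed.

Hypothesis nuq_vanishes : exists A, #|A| = (n - q)%N /\ nu A = 0.

Lemma fitted_capacity_capacity : capacity fitted_capacity.
Proof.
have [A [cardA nuA0]] := nuq_vanishes; apply: qminitive_ext_capacity nuq_top01 nuq_top_mono _ _.
  by rewrite /nuq_top eqxx.
exists A; split=> //; rewrite /nuq_top ifF //; apply/eqP=> AT.
by move: cardA; rewrite AT cardsT card_ord; lia.
Qed.

Lemma sugeno_fitted_ge k : alpha k - nabla <= sugeno fitted_capacity (x k).
Proof.
have t_le : alpha k - nabla <= Num.max (alpha k - nabla) 0 by rewrite le_max lexx.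
apply: le_trans t_le _.
apply: le_sugeno_qminitive fitted_capacity_capacity fitted_capacity_qminitive _ _.
  by rewrite ge_max ler01 andbT; have := alpha01 k; have := nablaq_ge0; lra.
move=> A Alarge; rewrite fitted_capacityE // le_max; have [//|gamma_lt] := leP.
by apply/orP; right; apply: (bigmax_sup k) => //; rewrite /epsop gamma_lt.
Qed.

Lemma sugeno_fitted_le k : sugeno fitted_capacity (x k) <= alpha k + nabla.
Proof.
have [_ _ _ mu_mono] := fitted_capacity_capacity; have [ak_ge0 _] := andP (alpha01 k).
have [A1 A1large] := qlarge_exists q_range.
have [A Alarge nablaIE] := eq_bigmin A1 _ _ A1large (fun A _ => nablaIA_le1 k A).
have : nablaIA x alpha k A <= nabla by rewrite -nablaIE; exact: le_bigmax.
rewrite /nablaIA ge_max pospart_le => /andP [/andP [gamma_le _] /bigmax_leP [_ sigma_le]].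
apply: le_trans (sugeno_le_gamma_max _ _ A mu_mono) _.
rewrite fitted_capacityE // ge_max; apply/andP; split; first lra.
apply: bigmax_le => [|l _]; first by have := nablaq_ge0; lra.
exact: epsop_le_sigma_eps (gamma_ge0 _ _ _) ak_ge0 nablaq_ge0 (sigma_le l isT).
Qed.

Lemma sugeno_error_fitted_le : sugeno_error x alpha fitted_capacity <= nabla.
Proof.
apply: bigmax_le => [|k _]; first exact: nablaq_ge0.
by rewrite ler_norml; apply/andP; split;
  [have := sugeno_fitted_ge k | have := sugeno_fitted_le k]; lra.
Qed.

End Fitting.

Theorem theorem5 (R : realType) (n N : nat) (x : 'I_N -> 'I_n -> R) (alpha : 'I_N -> R)
  (q : nat) :
  (forall k i, 0 <= x k i <= 1) ->
  (forall k, 0 <= alpha k <= 1) ->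
  (1 <= q <= n)%N ->
  (exists A : {set 'I_n}, #|A| = (n - q)%N /\ nuq x alpha q A = 0) ->
  (exists mu : {set 'I_n} -> R,
      [/\ capacity mu, qminitive q mu & sugeno_error x alpha mu = nablaq x alpha q]) /\
  (forall mu : {set 'I_n} -> R, capacity mu -> qminitive q mu ->
      nablaq x alpha q <= sugeno_error x alpha mu).
Proof.
move=> x01 alpha01 q_range nu_vanishes.
split=> [|mu mu_cap mu_qmin]; last exact: nablaq_le_sugeno_error.
have cap := fitted_capacity_capacity alpha01 q_range nu_vanishes.
have qmin : qminitive q (fitted_capacity x alpha q) by exact: fitted_capacity_qminitive.
exists (fitted_capacity x alpha q); split=> //; apply: le_anti.
by rewrite sugeno_error_fitted_le //=; apply: nablaq_le_sugeno_error.
Qed.
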